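(* Let $D$ be an instance all of whose tuples are endogenous ($D^n=D$), let $\mathcal{Q}$ be a monotone query, and let $\bar a\in\mathcal{Q}(D)$. A tuple $t$ is a most responsible actual cause for $\bar a$ if and only if there is $D'\subseteq D$ with $t\in(D\smallsetminus D')\subseteq D^n$ and $(D,D',\bar a)\in\mathcal{MSSEP}^{c}(\mathcal{Q})$.
   Context: A query $\mathcal{Q}$ is monotone if $D_1\subseteq D_2$ implies $\mathcal{Q}(D_1)\subseteq\mathcal{Q}(D_2)$; $D\models\mathcal{Q}(\bar a)$ means $\bar a\in\mathcal{Q}(D)$. A tuple $\tau\in D^n$ is an actual cause for $\bar a$ if there is $\Gamma\subseteq D^n$ (contingency set) with $D\smallsetminus\Gamma\models\mathcal{Q}(\bar a)$ and $D\smallsetminus(\Gamma\cup\{\tau\})\not\models\mathcal{Q}(\bar a)$. The responsibility of an actual cause $\tau$ is $1/(|\Gamma|+1)$ with $\Gamma$ a minimum-size contingency set for $\tau$; a most responsible actual cause is an actual cause of maximum responsibility. $\mathcal{MSSEP}^{c}(\mathcal{Q})$ is the set of triples $(D,D',\bar a)$ with $\bar a\in\mathcal{Q}(D)$, $D'\subseteq D$, $\bar a\notin\mathcal{Q}(D')$, and $D'$ of maximum cardinality among subsets of $D$ with this last property. *)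

From mathcomp Require Import all_boot all_order all_algebra.
Set Implicit Arguments. Unset Strict Implicit. Unset Printing Implicit Defensive.
Import Order.TTheory GRing.Theory Num.Theory.

(* Database instances: finite sets of tuples drawn from a finite universe T.
   A query Q with answers of type A: [Q D a] means D |= Q(a). *)
Section Causality.
Variables (T : finType) (A : Type).
Implicit Types (Q : {set T} -> A -> bool) (D Dn G : {set T}).

Definition monotone_query Q :=
  forall D1 D2 a, D1 \subset D2 -> Q D1 a -> Q D2 a.

Definition is_contingency Q Dn D a (t : T) G : bool :=
  [&& G \subset Dn, Q (D :\: G) a & ~~ Q (D :\: (t |: G)) a].

Definition actual_cause Q Dn D a (t : T) : bool :=
  (t \in Dn) && [exists G, is_contingency Q Dn D a t G].

(* size of a minimum-size contingency set (meaningful for actual causes) *)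
Definition min_contingency_size Q Dn D a (t : T) : nat :=
  \big[minn/#|T|.+1]_(G : {set T} | is_contingency Q Dn D a t G) #|G|.

Definition responsibility Q Dn D a (t : T) : rat :=
  ((min_contingency_size Q Dn D a t).+1%:R)^-1.

Definition most_responsible_cause Q Dn D a (t : T) : Prop :=
  actual_cause Q Dn D a t /\
  forall t', actual_cause Q Dn D a t' ->
    (responsibility Q Dn D a t' <= responsibility Q Dn D a t)%R.

Definition MSSEPc Q D D' a : Prop :=
  [/\ Q D a, D' \subset D, ~~ Q D' a &
      forall D'', D'' \subset D -> ~~ Q D'' a -> #|D''| <= #|D'|].
End Causality.

From mathcomp Require Import all_boot all_order all_algebra.
From mathcomp Require Import zify.
Import Order.TTheory GRing.Theory Num.Theory.
Set Implicit Arguments. Unset Strict Implicit.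

(* When every tuple is endogenous, a contingency set G for t is the same thing
   as a non-answer M := D \ ({t} u G) avoiding t with Q (M u {t}), and
   |G| = |D| - |M| - 1.  Hence a most responsible cause is one realizing the
   largest such non-answer.  A maximum-size non-answer M (an MSSEP witness)
   satisfies Q (M u {t}) for every t in D \ M by maximality, so all these t
   attain the smallest possible contingency size |D| - |M| - 1. *)

Section MinContingency.
Variables (T : finType) (A : Type) (Q : {set T} -> A -> bool).
Variables (Dn D : {set T}) (a : A).

Lemma min_contingency_size_le t G :
  is_contingency Q Dn D a t G -> min_contingency_size Q Dn D a t <= #|G|.
Proof. exact: (bigmin_le_cond (T := nat) #|T|.+1 (fun G : {set T} => #|G|)). Qed.

Lemma min_contingency_sizeP t : actual_cause Q Dn D a t ->
  exists2 G, is_contingency Q Dn D a t G & min_contingency_size Q Dn D a t = #|G|.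
Proof.
case/andP=> _ /existsP[G0 cG0].
rewrite /min_contingency_size -minEnat.
have le_card (G : {set T}) : #|G| <= #|T|.+1 by exact: leqW (max_card G).
have [G cG ->] := eq_bigmin (T := nat) G0 _ _ cG0 (fun G _ => le_card G).
by exists G.
Qed.

Lemma responsibility_le t t' :
  (responsibility Q Dn D a t' <= responsibility Q Dn D a t)%R =
  (min_contingency_size Q Dn D a t <= min_contingency_size Q Dn D a t').
Proof. by rewrite /responsibility lef_pV2 ?posrE ?ltr0n // ler_nat ltnS. Qed.

End MinContingency.

Section EndogenousInstance.
Variables (T : finType) (A : Type) (Q : {set T} -> A -> bool).
Variables (D : {set T}) (a : A).

Lemma card_contingency t G : t \in D -> is_contingency Q D D a t G ->
  #|D :\: (t |: G)| + #|G| + 1 = #|D|.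
Proof.
move=> tD /and3P[GD QG nQ].
have tG : t \notin G.
  by apply: contra nQ => tG; rewrite (setUidPr _) ?sub1set.
have tGD : t |: G \subset D by rewrite subUset sub1set tD GD.
have := subset_leq_card tGD; rewrite cardsD (setIidPr tGD) cardsU1 tG; lia.
Qed.

Lemma contingency_of_nonanswer (M : {set T}) t :
  M \subset D -> t \in D :\: M -> ~~ Q M a -> Q (t |: M) a ->
  is_contingency Q D D a t (D :\: (t |: M)).
Proof.
move=> MD /setDP[tD tM] nQM QtM; rewrite /is_contingency subsetDl.
have -> : D :\: (D :\: (t |: M)) = t |: M.
  by rewrite setDDr setDv set0U (setIidPr _) // subUset sub1set tD.
have -> : D :\: (t |: (D :\: (t |: M))) = M.
  apply/setP => x; rewrite !inE.
  case: (x =P t) => [->|_] /=; first by rewrite (negbTE tM).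
  by case: (boolP (x \in M)) => [/(subsetP MD)->|_]; rewrite ?andNb.
exact/and3P.
Qed.

Section MaximumNonanswer.
Variable M : {set T}.
Hypothesis MSSEP_M : MSSEPc Q D M a.

Lemma MSSEPc_setD_neq0 : D :\: M != set0.
Proof.
case: MSSEP_M => QD MD nQM _; rewrite setD_eq0.
apply: contra nQM => DM; suff -> : M = D by [].
by apply/eqP; rewrite eqEsubset MD DM.
Qed.

Lemma MSSEPc_min_contingency_size_ge t : actual_cause Q D D a t ->
  #|D| <= min_contingency_size Q D D a t + #|M| + 1.
Proof.
move=> act; have [G cG ->] := min_contingency_sizeP act.
case: MSSEP_M => _ _ _ maxM; case/andP: act => tD _.
have := card_contingency tD cG; case/and3P: cG => _ _ /(maxM _ (subsetDl _ _)).
lia.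
Qed.

Lemma MSSEPc_actual_cause t : t \in D :\: M ->
  actual_cause Q D D a t /\ min_contingency_size Q D D a t + #|M| + 1 = #|D|.
Proof.
move=> tDM; have [_ MD nQM maxM] := MSSEP_M; have /setDP[tD tM] := tDM.
have tMD : t |: M \subset D by rewrite subUset sub1set tD MD.
have QtM : Q (t |: M) a.
  by apply: contraT => /(maxM _ tMD); rewrite cardsU1 tM ltnn.
have cG := contingency_of_nonanswer MD tDM nQM QtM.
have act : actual_cause Q D D a t.
  by rewrite /actual_cause tD; apply/existsP; exists (D :\: (t |: M)).
split=> //; apply/eqP; rewrite eqn_leq MSSEPc_min_contingency_size_ge // andbT.
have := min_contingency_size_le cG; have := subset_leq_card tMD.
rewrite cardsD (setIidPr tMD) cardsU1 tM; lia.
Qed.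

Lemma MSSEPc_most_responsible_cause t : t \in D :\: M ->
  most_responsible_cause Q D D a t.
Proof.
move=> tDM; have [act min_t] := MSSEPc_actual_cause tDM.
split=> // t' act'; rewrite responsibility_le.
by have := MSSEPc_min_contingency_size_ge act'; lia.
Qed.

End MaximumNonanswer.

Hypothesis QD : Q D a.

Lemma MSSEPc_exists (X : {set T}) : X \subset D -> ~~ Q X a ->
  exists M, MSSEPc Q D M a.
Proof.
move=> XD nQX; pose nonanswer (Y : {set T}) := (Y \subset D) && ~~ Q Y a.
have nX : nonanswer X by apply/andP.
case: (arg_maxnP (fun Y : {set T} => #|Y|) nX) => M /andP[MD nQM] maxM.
by exists M; split=> // Y YD nQY; apply: maxM; apply/andP.
Qed.

Lemma most_responsible_cause_MSSEPc t : most_responsible_cause Q D D a t ->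
  exists2 D', t \in D :\: D' & MSSEPc Q D D' a.
Proof.
case=> act most; have [G cG min_t] := min_contingency_sizeP act.
have tD : t \in D by case/andP: act.
have card_G := card_contingency tD cG.
case/and3P: (cG) => _ _ nQ; exists (D :\: (t |: G)); first by rewrite !inE eqxx tD.
split=> // [|X XD nQX]; first exact: subsetDl.
have [M MSSEP_M] := MSSEPc_exists XD nQX.
have [t' t'DM] := set0Pn _ (MSSEPc_setD_neq0 MSSEP_M).
have [act' min_t'] := MSSEPc_actual_cause MSSEP_M t'DM.
have := most t' act'; rewrite responsibility_le min_t.
have [_ _ _ /(_ X XD nQX)] := MSSEP_M; lia.
Qed.

End EndogenousInstance.

Theorem proposition11 (T : finType) (A : Type) (Q : {set T} -> A -> bool)
    (Dn D : {set T}) (a : A) :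
  Dn = D ->
  monotone_query Q ->
  Q D a ->
  forall t : T,
    most_responsible_cause Q Dn D a t <->
    exists D' : {set T},
      [/\ t \in D :\: D', D :\: D' \subset Dn & MSSEPc Q D D' a].
Proof.
move=> -> _ QD t; split.
- case/(most_responsible_cause_MSSEPc QD) => D' tDD' MSSEP_D'.
  by exists D'; rewrite subsetDl.
- by case=> D' [tDD' _ MSSEP_D']; exact: (MSSEPc_most_responsible_cause MSSEP_D' tDD').
Qed.
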